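(* Let $G$ be a connected graph, let $L$ be a list-assignment with $|L(u)|\ge\deg(u)+1$ for all $u\in V(G)$, and let $\alpha,\beta$ be two unfrozen $L$-colourings. For each vertex $w$, there exists a recolouring sequence $\mathcal{S}$ from $\alpha$ to some $L$-colouring $\gamma$ such that (i) either $\gamma(w)=\beta(w)$, or there is precisely one vertex $x\in N(w)$ with $\gamma(x)=\beta(w)$ and both $w$ and $x$ are frozen under $\gamma$; and (ii) $|\mathcal{S}|\le\deg(w)+2$, with equality only if $\gamma(w)=\beta(w)$.
   Context: An $L$-colouring is a proper colouring $\varphi$ with $\varphi(v)\in L(v)$ for all $v$. A recolouring sequence is a sequence of single-vertex recolouring steps, each changing the colour of one vertex to another colour of its list so that the colouring remains proper; $|\mathcal{S}|$ is its number of steps. A vertex $u$ is frozen under $\varphi$ if every colour of $L(u)\setminus\{\varphi(u)\}$ appears on a neighbour of $u$; a colouring is unfrozen if at least one vertex is unfrozen under it. *)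

From mathcomp Require Import all_boot.
Set Implicit Arguments. Unset Strict Implicit. Unset Printing Implicit Defensive.

Section Defs.
Variables (V C : finType) (e : rel V) (L : V -> {set C}).

Definition simple_graph := symmetric e /\ irreflexive e.
Definition connected_graph := forall x y : V, connect e x y.
Definition deg (u : V) : nat := #|[set v | e u v]|.

Definition is_Lcol (phi : {ffun V -> C}) : bool :=
  [forall u, phi u \in L u] && [forall u, forall v, e u v ==> (phi u != phi v)].

Definition recol_step (f g : {ffun V -> C}) : bool :=
  [exists v, (f v != g v) && [forall u, (u != v) ==> (f u == g u)]] && is_Lcol g.

(* s is a recolouring sequence from alpha to gamma; |S| = size s *)
Definition recol_seq (alpha gamma : {ffun V -> C}) (s : seq {ffun V -> C}) : Prop :=
  path recol_step alpha s /\ last alpha s = gamma.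

Definition frozen (phi : {ffun V -> C}) (u : V) : Prop :=
  forall c, c \in L u -> c != phi u -> exists v, e u v /\ phi v = c.

Definition unfrozen_col (phi : {ffun V -> C}) : Prop := exists u, ~ frozen phi u.
End Defs.

From mathcomp Require Import all_boot zify.

Set Implicit Arguments. Unset Strict Implicit. Unset Printing Implicit Defensive.

(** Let [c = beta w]. Since [|L u| > deg u], the neighbours of a frozen
    vertex [u] carry the colours of [L u] other than its own, each exactly
    once. Recolour the [c]-coloured neighbours of [w] away one at a time, as
    long as one of them is unfrozen: this never freezes another one, since
    two such neighbours are non-adjacent. If all remaining ones are frozen
    and so is [w], the frozen-neighbour bijection at [w] leaves exactly one
    of them, and we stop. Otherwise recolour [w] to a free colour: this
    deletes the unique occurrence of the old colour of [w] around each
    [c]-coloured neighbour, unfreezing all of them, so they can all be moved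
    away and [w] finally recoloured [c]. Every other step moves a neighbour
    of [w] out of colour [c], so at most [deg w + 2] steps are used, and all
    of them only if [w] ends with colour [c]. *)

Section Recolouring.
Variables (V C : finType) (e : rel V) (L : V -> {set C}).
Hypothesis e_sym : symmetric e.
Hypothesis e_irr : irreflexive e.
Hypothesis L_large : forall u, deg e u + 1 <= #|L u|.

Implicit Types (phi psi gamma : {ffun V -> C}) (u v w x y : V) (b c d : C).

Definition nbhd u := [set v | e u v].

Lemma is_LcolP phi :
  reflect ((forall u, phi u \in L u) /\ (forall u v, e u v -> phi u != phi v))
          (is_Lcol e L phi).
Proof.
apply: (iffP andP) => [[/forallP inL /forallP proper] | [inL proper]].
  by split=> // u v; apply/implyP; move/forallP: (proper u).
by split; apply/forallP=> // u; apply/forallP=> v; apply/implyP; apply: proper.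
Qed.

Lemma Lcol_mem phi u : is_Lcol e L phi -> phi u \in L u.
Proof. by case/is_LcolP. Qed.

Lemma Lcol_edge phi u v : is_Lcol e L phi -> e u v -> phi u != phi v.
Proof. by case/is_LcolP=> _; apply. Qed.

Definition free_colour phi u d :=
  [&& d \in L u, d != phi u & [forall (v | e u v), phi v != d]].

Definition frozenb phi u := ~~ [exists d, free_colour phi u d].

Lemma frozenP phi u : reflect (frozen e L phi u) (frozenb phi u).
Proof.
apply: (iffP negP) => [nofree d dL d_phi | fz /existsP [d /and3P [dL d_phi]]].
  have /negP := nofree; rewrite negb_exists => /forallP/(_ d).
  rewrite /free_colour dL d_phi negb_forall_in => /exists_inP [v uv /negbNE/eqP].
  by exists v.
by have [v [uv <-]] := fz d dL d_phi => /forall_inP/(_ v uv); rewrite eqxx.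
Qed.

Lemma not_frozen_free phi u : ~ frozen e L phi u -> exists d, free_colour phi u d.
Proof. by move=> u_unfrozen; apply/existsP/negbNE/frozenP. Qed.

Lemma frozen_local phi psi u : psi u = phi u -> (forall v, e u v -> psi v = phi v) ->
  frozen e L phi u -> frozen e L psi u.
Proof.
move=> psi_u psi_nbhd fz d dL; rewrite psi_u => d_phi.
by have [v [uv <-]] := fz d dL d_phi; exists v; rewrite psi_nbhd.
Qed.

Lemma frozen_colours_sub phi u :
  frozen e L phi u -> L u :\ phi u \subset phi @: nbhd u.
Proof.
move=> fz; apply/subsetP => d; rewrite !inE => /andP [d_phi dL].
by have [v [uv <-]] := fz d dL d_phi; rewrite imset_f ?inE.
Qed.

Lemma card_nbhd_le phi u : #|nbhd u| <= #|L u :\ phi u|.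
Proof.
have := L_large u; rewrite /deg -/(nbhd u) (cardsD1 (phi u) (L u)).
by case: (phi u \in L u); lia.
Qed.

Lemma frozen_image_nbhd phi u : frozen e L phi u -> phi @: nbhd u = L u :\ phi u.
Proof.
move=> fz; apply/esym/eqP; rewrite eqEcard frozen_colours_sub //=.
exact: leq_trans (leq_imset_card _ _) (card_nbhd_le phi u).
Qed.

Lemma frozen_inj_nbhd phi u : frozen e L phi u -> {in nbhd u &, injective phi}.
Proof.
move=> fz; apply/imset_injP; rewrite eqn_leq leq_imset_card /=.
by rewrite (frozen_image_nbhd fz) card_nbhd_le.
Qed.

Definition recolour phi v d : {ffun V -> C} :=
  [ffun u => if u == v then d else phi u].

Lemma Lcol_recolour phi v d :
  is_Lcol e L phi -> free_colour phi v d -> is_Lcol e L (recolour phi v d).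
Proof.
move=> phiL /and3P [dL _ /forall_inP d_nbhd]; apply/is_LcolP; split=> [u|x y xy].
  by rewrite ffunE; case: eqP => [->|_] //; apply: Lcol_mem.
rewrite !ffunE; case: (eqVneq x v) => [xv|xv]; case: (eqVneq y v) => [yv|yv].
- by move: xy; rewrite xv yv e_irr.
- by rewrite eq_sym d_nbhd // -xv.
- by rewrite d_nbhd // -yv e_sym.
- exact: Lcol_edge.
Qed.

Lemma recol_step_recolour phi v d :
  is_Lcol e L phi -> free_colour phi v d -> recol_step e L phi (recolour phi v d).
Proof.
move=> phiL vd; rewrite /recol_step Lcol_recolour // andbT.
case/and3P: vd => _ d_phi _; apply/existsP; exists v.
rewrite ffunE eqxx eq_sym d_phi; apply/forall_inP => u /negPf uv.
by rewrite ffunE uv.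
Qed.

Lemma recol_seq_cons phi psi gamma s : recol_step e L phi psi ->
  recol_seq e L psi gamma s -> recol_seq e L phi gamma (psi :: s).
Proof. by move=> step [s_path s_last]; split; rewrite //= step. Qed.

Lemma frozen_recolour_nonadj phi x d y : y != x -> ~~ e y x ->
  frozen e L (recolour phi x d) y -> frozen e L phi y.
Proof.
move=> /negPf yx /negP yx_nonadj; apply: frozen_local; first by rewrite ffunE yx.
by move=> v yv; rewrite ffunE; case: eqP => // vx; rewrite -vx in yx_nonadj.
Qed.

Lemma frozen_nbr_recolour phi w b y : e y w -> b != phi w ->
  frozen e L phi y -> ~ frozen e L (recolour phi w b) y.
Proof.
move=> yw b_phi fz fz'.
have: phi w \in phi @: nbhd y by rewrite imset_f ?inE.
rewrite (frozen_image_nbhd fz) !inE => /andP [phiw_y phiw_L].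
have /negPf y_w : y != w by apply: contraTneq yw => ->; rewrite e_irr.
have := fz' (phi w) phiw_L; rewrite ffunE y_w => /(_ phiw_y) [v [yv]].
rewrite ffunE.
case: (eqVneq v w) => [_ phiw | vw phiv]; first by rewrite phiw eqxx in b_phi.
by case/eqP: vw; apply: (frozen_inj_nbhd fz); rewrite ?inE.
Qed.

Definition coloured_nbrs phi w c := [set x | e w x && (phi x == c)].

Lemma card_coloured_nbrs phi w c : #|coloured_nbrs phi w c| <= deg e w.
Proof. by apply/subset_leq_card/subsetP => x; rewrite !inE => /andP []. Qed.

Lemma coloured_nbrs_recolour phi w x c d : phi x = c -> d != c ->
  coloured_nbrs (recolour phi x d) w c = coloured_nbrs phi w c :\ x.
Proof.
move=> phix /negPf dc; apply/setP => y; rewrite !inE ffunE.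
by case: (eqVneq y x) => [->|] //=; rewrite dc andbF.
Qed.

Lemma card_coloured_nbrs_recolour phi w x c d : e w x -> phi x = c -> d != c ->
  #|coloured_nbrs (recolour phi x d) w c|.+1 = #|coloured_nbrs phi w c|.
Proof.
move=> wx phix dc; rewrite coloured_nbrs_recolour // [RHS](cardsD1 x).
by rewrite !inE wx phix eqxx.
Qed.

Lemma coloured_nbrs_recolour_self phi w b c :
  coloured_nbrs (recolour phi w b) w c = coloured_nbrs phi w c.
Proof.
apply/setP => y; rewrite !inE ffunE.
by case: (eqVneq y w) => [->|] //=; rewrite e_irr.
Qed.

Lemma coloured_nbr_free_colour phi w x c :
  x \in coloured_nbrs phi w c -> ~ frozen e L phi x ->
  exists2 d, d != c & free_colour phi x d.
Proof.
rewrite inE => /andP [_ /eqP <-] /not_frozen_free [d xd].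
by exists d => //; case/and3P: xd.
Qed.

Lemma recolour_to_colour phi w c : is_Lcol e L phi -> c \in L w ->
  {in coloured_nbrs phi w c, forall x, ~ frozen e L phi x} ->
  exists gamma s, [/\ recol_seq e L phi gamma s, gamma w = c
                    & size s <= #|coloured_nbrs phi w c|.+1].
Proof.
have [n] := ubnP #|coloured_nbrs phi w c|; elim: n phi => // n IH phi.
rewrite ltnS => K_n phiL cL K_unfrozen.
have [K0 | [x xK]] := set_0Vmem (coloured_nbrs phi w c).
  case: (eqVneq (phi w) c) => [<- | phiw]; first by exists phi, [::].
  have wc : free_colour phi w c.
    rewrite /free_colour cL eq_sym phiw; apply/forall_inP => v wv; apply/eqP => phiv.
    by have := in_set0 v; rewrite -K0 inE wv phiv eqxx.
  exists (recolour phi w c), [:: recolour phi w c].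
  by rewrite ffunE eqxx; split=> //; split; rewrite //= recol_step_recolour.
have [d dc xd] := coloured_nbr_free_colour xK (K_unfrozen x xK).
move: xK; rewrite inE => /andP [wx /eqP phix].
have K_card := card_coloured_nbrs_recolour wx phix dc.
have psi_unfrozen : {in coloured_nbrs (recolour phi x d) w c,
                     forall y, ~ frozen e L (recolour phi x d) y}.
  move=> y; rewrite coloured_nbrs_recolour // => /setD1P [yx yK].
  move=> /(frozen_recolour_nonadj yx) fz; apply: (K_unfrozen y yK); apply: fz.
  move: yK; rewrite inE => /andP [_ /eqP phiy].
  by apply: (contraL (Lcol_edge phiL)); rewrite phiy phix.
have [|gamma [s [psi_gamma gamma_w size_s]]] :=
  IH _ _ (Lcol_recolour phiL xd) cL psi_unfrozen; first by lia.
exists gamma, (recolour phi x d :: s); split=> //=; last by lia.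
by apply: recol_seq_cons => //; apply: recol_step_recolour.
Qed.

Definition blocked gamma w c := exists x, e w x /\ gamma x = c /\
  (forall y, e w y -> gamma y = c -> y = x) /\
  frozen e L gamma w /\ frozen e L gamma x.

Lemma recolour_towards phi w c : is_Lcol e L phi -> c \in L w ->
  exists gamma s, [/\ recol_seq e L phi gamma s, gamma w = c \/ blocked gamma w c,
                      size s <= #|coloured_nbrs phi w c| + 2
                    & size s = #|coloured_nbrs phi w c| + 2 -> gamma w = c].
Proof.
have [n] := ubnP #|coloured_nbrs phi w c|; elim: n phi => // n IH phi.
rewrite ltnS => K_n phiL cL.
case: (eqVneq (phi w) c) => [phiw | phiw]; first by exists phi, [::]; split; auto.
case: (boolP [forall x in coloured_nbrs phi w c, frozenb phi x]) => [/forall_inP K_frozen|].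
  case: (boolP (frozenb phi w)) => [/frozenP w_frozen | /frozenP/not_frozen_free [b wb]].
    have c_phiw : c != phi w by rewrite eq_sym.
    have [x [wx phix]] := w_frozen c cL c_phiw.
    exists phi, [::]; split=> //=; last by lia.
    right; exists x; split=> //; split=> //; split.
      by move=> y wy phiy; apply: (frozen_inj_nbhd w_frozen); rewrite ?inE // phiy phix.
    by split=> //; apply/frozenP/K_frozen; rewrite inE wx phix eqxx.
  have psi_unfrozen : {in coloured_nbrs (recolour phi w b) w c,
                       forall y, ~ frozen e L (recolour phi w b) y}.
    move=> y; rewrite coloured_nbrs_recolour_self => yK.
    have wy : e w y by move: yK; rewrite inE => /andP [].
    by apply: frozen_nbr_recolour; [rewrite e_sym | case/and3P: wb | apply/frozenP/K_frozen].
  have [gamma [s [psi_gamma gamma_w size_s]]] :=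
    recolour_to_colour (Lcol_recolour phiL wb) cL psi_unfrozen.
  exists gamma, (recolour phi w b :: s); split; last by [].
  - by apply: recol_seq_cons => //; apply: recol_step_recolour.
  - by left.
  - by move: size_s; rewrite coloured_nbrs_recolour_self /=; lia.
case/forall_inPn => x xK /frozenP x_unfrozen.
have [d dc xd] := coloured_nbr_free_colour xK x_unfrozen.
move: xK; rewrite inE => /andP [wx /eqP phix].
have K_card := card_coloured_nbrs_recolour wx phix dc.
have [|gamma [s [psi_gamma reached size_s size_max]]] :=
  IH _ _ (Lcol_recolour phiL xd) cL; first by lia.
exists gamma, (recolour phi x d :: s); split=> //=.
- by apply: recol_seq_cons => //; apply: recol_step_recolour.
- by lia.
- by move=> size_eq; apply: size_max; lia.
Qed.

End Recolouring.

Theorem mainTheorem6 (V C : finType) (e : rel V) (L : V -> {set C})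
  (alpha beta : {ffun V -> C}) (w : V) :
  simple_graph e -> connected_graph e ->
  (forall u, deg e u + 1 <= #|L u|) ->
  is_Lcol e L alpha -> is_Lcol e L beta ->
  unfrozen_col e L alpha -> unfrozen_col e L beta ->
  exists (gamma : {ffun V -> C}) (s : seq {ffun V -> C}),
    recol_seq e L alpha gamma s /\
    (gamma w = beta w \/
     exists x, e w x /\ gamma x = beta w /\
       (forall y, e w y -> gamma y = beta w -> y = x) /\
       frozen e L gamma w /\ frozen e L gamma x) /\
    size s <= deg e w + 2 /\
    (size s = deg e w + 2 -> gamma w = beta w).
Proof.
move=> [e_sym e_irr] _ L_large alphaL betaL _ _.
have [gamma [s [alpha_gamma reached size_s size_max]]] :=
  recolour_towards e_sym e_irr L_large alphaL (Lcol_mem w betaL).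
have K_deg := card_coloured_nbrs e alpha w (beta w).
exists gamma, s; split=> //; split=> //; split=> [|size_eq]; first by lia.
by apply: size_max; lia.
Qed.
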